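(* If the anti-rotor $\mathfrak{u}_A$ of an algebra $A$ is one-dimensional and contains a nonsingular matrix, then $A$ is simple.
   Context: An ''algebra'' is a real finite-dimensional unital associative algebra with underlying vector space $\mathbb{R}^n$, standard basis, elements column vectors $s=(x_1,\dots,x_n)^T$, $\mathbf{d}s=(dx_1,\dots,dx_n)^T$. An uncurling metric of $A$ is a real symmetric $n\times n$ matrix $L$ with $d\big((s^{-1})^TL\,\mathbf{d}s\big)=0$ on an open ball centered at $\mathbf{1}_A$ consisting only of units; the anti-rotor $\mathfrak{u}_A$ is the real vector space of all uncurling metrics of $A$. *)

From HB Require Import structures.
From mathcomp Require Import all_boot all_order all_algebra.
From mathcomp Require Import all_classical all_reals all_analysis.
Set Implicit Arguments. Unset Strict Implicit. Unset Printing Implicit Defensive.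
Import Order.TTheory GRing.Theory Num.Theory.
Import numFieldNormedType.Exports.
Local Open Scope ring_scope.

(* A real finite-dimensional algebra on R^n (column vectors 'cV[R]_n, standard
   basis) given by structure constants c : e_i * e_j = \sum_k c i j k e_k. *)
Definition amul (R : realType) (n : nat) (c : 'I_n -> 'I_n -> 'I_n -> R)
  (x y : 'cV[R]_n) : 'cV[R]_n :=
  \col_k \sum_(i < n) \sum_(j < n) c i j k * x i 0 * y j 0.

Definition is_unital_assoc_algebra (R : realType) (n : nat)
  (c : 'I_n -> 'I_n -> 'I_n -> R) (e : 'cV[R]_n) : Prop :=
  (forall x y z, amul c (amul c x y) z = amul c x (amul c y z)) /\
  (forall x, amul c e x = x) /\ (forall x, amul c x e = x).

Definition bvec (R : realType) (n : nat) (k : 'I_n) : 'cV[R]_n := delta_mx k 0.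

(* L is an uncurling metric: L symmetric, and there is an open ball around
   the unit e consisting only of units (inv gives the algebra inverse on it)
   on which the 1-form (s^{-1})^T L ds = \sum_j f_j(s) dx_j,
   f_j(s) = ((s^{-1})^T L)_j, is closed: the f_j are differentiable and
   d_k f_j = d_j f_k for all j, k. *)
Definition uncurling_metric (R : realType) (n : nat)
  (c : 'I_n -> 'I_n -> 'I_n -> R) (e : 'cV[R]_n) (L : 'M[R]_n) : Prop :=
  L^T = L /\
  exists (r : R) (inv : 'cV[R]_n -> 'cV[R]_n), 0 < r /\
    (forall s, ball e r s -> amul c s (inv s) = e /\ amul c (inv s) s = e) /\
    (forall s, ball e r s ->
       let f (j : 'I_n) := fun t : 'cV[R]_n => ((inv t)^T *m L) 0 j in
       (forall j, differentiable (f j) s) /\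
       (forall j k, 'D_(bvec R k) (f j) s = 'D_(bvec R j) (f k) s)).

Definition anti_rotor (R : realType) (n : nat)
  (c : 'I_n -> 'I_n -> 'I_n -> R) (e : 'cV[R]_n) : set 'M[R]_n :=
  [set L | uncurling_metric c e L].

Definition one_dimensional (R : realType) (n : nat) (V : set 'M[R]_n) : Prop :=
  exists L0, V L0 /\ L0 != 0 /\ forall L, V L <-> exists a : R, L = a *: L0.

Definition two_sided_ideal (R : realType) (n : nat)
  (c : 'I_n -> 'I_n -> 'I_n -> R) (I : set 'cV[R]_n) : Prop :=
  I 0 /\ (forall x y, I x -> I y -> I (x + y)) /\
  (forall (a : R) x, I x -> I (a *: x)) /\
  (forall a x, I x -> I (amul c a x) /\ I (amul c x a)).

Definition simple_algebra (R : realType) (n : nat)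
  (c : 'I_n -> 'I_n -> 'I_n -> R) (e : 'cV[R]_n) : Prop :=
  e != 0 /\ forall I, two_sided_ideal c I -> I = [set 0]%classic \/ I = setT.

From HB Require Import structures.
From mathcomp Require Import all_boot all_order all_algebra.
From mathcomp Require Import all_classical all_reals all_analysis.
From mathcomp Require Import ring.
Import numFieldNormedType.Exports.
Import Order.TTheory GRing.Theory Num.Theory.

Set Implicit Arguments.
Unset Strict Implicit.
Unset Printing Implicit Defensive.

Local Open Scope ring_scope.

(* Fix a nonsingular uncurling metric L. Since L is invertible, the closedness
   of (s^-1)^T L ds makes inversion differentiable near 1, and differentiating
   s s^-1 = 1 gives d(s^-1)(v) = - s^-1 v s^-1. Hence a symmetric matrix M is an
   uncurling metric as soon as (w u w)^T M v is symmetric in u and v.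
   If I is a proper two-sided ideal, the trace tau(x) of left multiplication by
   x on A/I satisfies tau(xy) = tau(yx), vanishes on I, and tau(1) = dim A/I is
   nonzero. Its Gram matrix G = (tau(e_i e_j)) passes the test above, so G is a
   nonzero element of the one-dimensional u_A, i.e. a nonzero multiple of L, and
   is nonsingular. As v^T G = 0 for every v in I, the ideal I is zero. *)

Section Multiplication.
Variables (R : realType) (n : nat) (c : 'I_n -> 'I_n -> 'I_n -> R).
Local Notation amul := (amul c).
Local Notation bvec := (bvec R).
Implicit Types x y : 'cV[R]_n.

(* Left multiplication by x, acting on row vectors as in mxalgebra. *)
Definition lmul_mx x : 'M[R]_n := \matrix_(j, k) \sum_i c i j k * x i 0.

Lemma lmul_mxE x y : y^T *m lmul_mx x = (amul x y)^T.
Proof.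
apply/rowP => k; rewrite !mxE; under eq_bigr do rewrite !mxE mulr_sumr.
rewrite exchange_big; apply: eq_bigr => i _; apply: eq_bigr => j _; ring.
Qed.

Lemma amulE x y : amul x y = (lmul_mx x)^T *m y.
Proof. by rewrite -[y in RHS]trmxK -trmx_mul lmul_mxE trmxK. Qed.

Lemma amulNr x y : amul x (- y) = - amul x y.
Proof. by rewrite !amulE mulmxN. Qed.

Lemma amul_bvec i j : amul (bvec i) (bvec j) = \col_k c i j k.
Proof.
apply/colP => k; rewrite amulE -colE !mxE (bigD1 i) //= big1 => [|i' /negPf ne].
  by rewrite !mxE eqxx mulr1 addr0.
by rewrite !mxE ne mulr0.
Qed.

Lemma amul_expand x y :
  amul x y = \sum_i \sum_j (x i 0 * y j 0) *: amul (bvec i) (bvec j).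
Proof.
apply/colP => k; rewrite !mxE summxE; apply: eq_bigr => i _.
rewrite summxE; apply: eq_bigr => j _; rewrite amul_bvec !mxE; ring.
Qed.

Fact lmul_mx_is_linear : linear lmul_mx.
Proof.
move=> a x y; apply/matrixP => j k; rewrite !mxE mulr_sumr -big_split.
by apply: eq_bigr => i _; rewrite !mxE mulrDr mulrCA.
Qed.
HB.instance Definition _ := GRing.isLinear.Build R 'cV[R]_n 'M[R]_n _ lmul_mx
  lmul_mx_is_linear.

Variable e : 'cV[R]_n.
Hypothesis alg : is_unital_assoc_algebra c e.

Lemma lmul_mxM x y : lmul_mx (amul x y) = lmul_mx y *m lmul_mx x.
Proof.
case: alg => assoc _; apply/eqP/mulmxP => u; rewrite -[u]trmxK mulmxA.
by rewrite !lmul_mxE assoc.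
Qed.

Lemma lmul_mx_unit : lmul_mx e = 1%:M.
Proof.
case: alg => _ [unitl _]; apply/eqP/mulmxP => u; rewrite -[u]trmxK.
by rewrite lmul_mxE unitl mulmx1.
Qed.

Lemma unit0_trivial : e = 0 -> forall m (A : 'M[R]_(n, m)), A = 0.
Proof.
by move=> e0 m A; rewrite -[A]mul1mx -lmul_mx_unit e0 linear0 mul0mx.
Qed.
End Multiplication.

Section CoordinateDerivatives.
Variables (R : realFieldType) (V : normedModType R).

Lemma is_derive_coord m p {g : V -> 'M[R]_(m, p)} {s v} i j :
  derivable g s v -> is_derive s v (fun t => g t i j) ('D_v g s i j).
Proof.
move=> dg; split; first by move/derivable_mxP : dg; apply.
by rewrite (derive_mx dg) mxE.
Qed.

Lemma is_derive_sum_fun m (F : 'I_m -> V -> R) (dF : 'I_m -> R) s v :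
  (forall i, is_derive s v (F i) (dF i)) ->
  is_derive s v (fun t => \sum_i F i t) (\sum_i dF i).
Proof.
have -> : (fun t => \sum_i F i t) = \sum_i F i.
  by apply: funext => t; rewrite fct_sumE.
exact: is_derive_sum.
Qed.

Lemma differentiable_trmx_mulmx n m (H : V -> 'cV[R]_n) (M : 'M[R]_(n, m)) s j :
  (forall i, differentiable (fun t => H t i 0) s) ->
  differentiable (fun t => ((H t)^T *m M) 0 j) s.
Proof.
move=> dH.
have -> : (fun t => ((H t)^T *m M) 0 j) = \sum_i (fun t => H t i 0 *: M i j).
  apply: funext => t; rewrite mxE fct_sumE.
  by apply: eq_bigr => i _; rewrite mxE.
by apply: differentiable_sum => i; apply: differentiableZl.
Qed.

Lemma derive_trmx_mulmx n m (H : V -> 'cV[R]_n) (M : 'M[R]_(n, m)) s v j :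
  derivable H s v ->
  'D_v (fun t => ((H t)^T *m M) 0 j) s = (('D_v H s)^T *m M) 0 j.
Proof.
move=> dH.
have -> : (fun t => ((H t)^T *m M) 0 j) = fun t => \sum_i H t i 0 * M i j.
  by apply: funext => t; rewrite mxE; apply: eq_bigr => i _; rewrite mxE.
suff [] : is_derive s v (fun t => \sum_i H t i 0 * M i j)
                        (\sum_i 'D_v H s i 0 * M i j).
  by move=> _ ->; rewrite mxE; apply: eq_bigr => i _; rewrite mxE.
apply: is_derive_sum_fun => i.
have [dF DF] := is_deriveM (is_derive_coord i 0 dH) (is_derive_cst (M i j) s v).
split=> //; apply: etrans DF _; rewrite /GRing.scale /=; ring.
Qed.
End CoordinateDerivatives.

Section InverseDerivative.
Variables (R : realType) (n : nat) (c : 'I_n -> 'I_n -> 'I_n -> R).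
Local Notation V := 'cV[R]_n.
Local Notation amul := (amul c).

Lemma is_derive_amul {g h : V -> V} {s v} :
  derivable g s v -> derivable h s v ->
  is_derive s v (fun t => amul (g t) (h t))
    (amul ('D_v g s) (h s) + amul (g s) ('D_v h s)).
Proof.
move=> dg dh.
have entry k : is_derive s v (fun t => amul (g t) (h t) k 0)
    ((amul ('D_v g s) (h s) + amul (g s) ('D_v h s)) k 0).
  have -> : (fun t => amul (g t) (h t) k 0) =
      fun t => \sum_i \sum_j c i j k * (g t i 0 * h t j 0).
    apply: funext => t; rewrite mxE.
    by under eq_bigr do under eq_bigr do rewrite -mulrA.
  rewrite !mxE -big_split; under eq_bigr do rewrite -big_split.
  apply: is_derive_sum_fun => i; apply: is_derive_sum_fun => j.
  have [dF DF] := is_deriveZ (c i j k)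
    (is_deriveM (is_derive_coord i 0 dg) (is_derive_coord j 0 dh)).
  by split=> //; apply: etrans DF _; rewrite /GRing.scale /=; ring.
have der : derivable (fun t => amul (g t) (h t)) s v.
  by apply/derivable_mxP => k l; rewrite [l]ord1; exact: ex_derive.
split=> //; apply/matrixP => k l; rewrite [l]ord1 (derive_mx der) mxE.
exact: derive_val.
Qed.

Variable e : V.
Hypothesis alg : is_unital_assoc_algebra c e.

Lemma derive_inverse (inv : V -> V) s v :
  (\forall t \near s, amul t (inv t) = e) -> amul (inv s) s = e ->
  derivable inv s v -> 'D_v inv s = - amul (inv s) (amul v (inv s)).
Proof.
case: alg => assoc [unitl _] inv_near inv_s dinv.
have [_ Dprod] := is_derive_amul (@derivable_id _ _ s v) dinv.
have Dprod0 : amul s ('D_v inv s) = - amul v (inv s).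
  move: Dprod; rewrite (near_eq_derive _ inv_near) derive_cst derive_id.
  by move/esym/eqP; rewrite addrC addr_eq0 => /eqP.
by rewrite -[LHS]unitl -inv_s assoc Dprod0 amulNr.
Qed.
End InverseDerivative.

Section UncurlingCriterion.
Variables (R : realType) (n : nat) (c : 'I_n -> 'I_n -> 'I_n -> R).
Variable e : 'cV[R]_n.
Local Notation amul := (amul c).

(* With d(s^-1)(v) = - s^-1 v s^-1, this is the closedness of (s^-1)^T M ds
   at s = w^-1. *)
Definition sandwich_symmetric (M : 'M[R]_n) := forall w u v : 'cV[R]_n,
  (amul w (amul u w))^T *m M *m v = (amul w (amul v w))^T *m M *m u.

Lemma uncurling_metric_sandwich (L M : 'M[R]_n) :
  is_unital_assoc_algebra c e -> uncurling_metric c e L -> L \in unitmx ->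
  M^T = M -> sandwich_symmetric M -> uncurling_metric c e M.
Proof.
move=> alg [_ [r [inv [r_gt0 [inv_ball closedL]]]]] L_unit M_sym M_sandwich.
split=> //; exists r, inv; do 2!split=> //; move=> s s_ball /=.
have [dfL _] := closedL s s_ball.
have dinv i : differentiable (fun t => inv t i 0) s.
  have -> : (fun t => inv t i 0) =
      fun t => ((((inv t)^T *m L)^T)^T *m invmx L) 0 i.
    by apply: funext => t; rewrite trmxK mulmxK // mxE.
  apply: differentiable_trmx_mulmx => k.
  have -> : (fun t => ((inv t)^T *m L)^T k 0) = fun t => ((inv t)^T *m L) 0 k.
    by apply: funext => t; rewrite mxE.
  exact: dfL.
have der_inv v : derivable inv s v.
  by apply/derivable_mxP => i l; rewrite [l]ord1; exact: diff_derivable.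
have inv_near : \forall t \near s, amul t (inv t) = e.
  have : \forall t \near s, ball e r t.
    by apply: open_nbhs_nbhs; split => //; exact: ball_open.
  by apply: filterS => t /inv_ball [].
have D_f v j : 'D_v (fun t => ((inv t)^T *m M) 0 j) s =
    - ((amul (inv s) (amul v (inv s)))^T *m M *m bvec R j) 0 0.
  rewrite derive_trmx_mulmx // (derive_inverse alg inv_near) //; last first.
    exact: (inv_ball s s_ball).2.
  by rewrite /bvec -colE linearN /= mulNmx !mxE.
split=> [j | j k]; first exact: differentiable_trmx_mulmx.
by rewrite !D_f M_sandwich.
Qed.
End UncurlingCriterion.

Lemma subspace_row_space (F : fieldType) n (I : set 'cV[F]_n) :
  I 0 -> (forall x y, I x -> I y -> I (x + y)) ->
  (forall a x, I x -> I (a *: x)) ->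
  exists U : 'M[F]_n, forall v, (v^T <= U)%MS <-> I v.
Proof.
move=> I0 ID IZ; pose rows_in (W : 'M[F]_n) := forall w, (w <= W)%MS -> I w^T.
pose has_rank k := `[< exists W, rows_in W /\ \rank W = k >].
have has_rank0 : has_rank 0%N.
  apply/asboolP; exists 0; split; last exact: mxrank0.
  by move=> w; rewrite submx0 => /eqP ->; rewrite trmx0.
have has_rank_le k : has_rank k -> (k <= n)%N.
  by move=> /asboolP [W [_ <-]]; exact: rank_leq_col.
have [k /asboolP [W [W_in rankW]] k_max] :=
  ex_maxnP (ex_intro has_rank 0%N has_rank0) has_rank_le.
exists W => v; split=> [/W_in|Iv]; first by rewrite trmxK.
apply/negPn/negP => vW.
have WvW : (W < W + v^T)%MS by rewrite ltmxE addsmxSl addsmx_sub submx_refl.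
have : has_rank (\rank (W + v^T)%MS).
  apply/asboolP; exists (W + v^T)%MS; split=> // w /sub_addsmxP [[a b] ->] /=.
  rewrite raddfD /=; apply: ID; first by apply: W_in; exact: submxMl.
  by rewrite [b]mx11_scalar mul_scalar_mx linearZ /= trmxK; exact: IZ.
move/k_max; rewrite -rankW leqNgt.
by move: WvW; rewrite ltmxErank => /andP [_ ->].
Qed.

Lemma mxtrace_pid_mx (F : fieldType) n r :
  (r <= n)%N -> \tr (pid_mx r : 'M[F]_n) = r%:R.
Proof.
move=> le_rn; transitivity (\sum_(i < n | (i < r)%N) (1 : F)).
  rewrite big_mkcond; apply: eq_bigr => i _.
  by rewrite mxE eqxx; case: (i < r)%N.
by rewrite -(big_ord_widen n (fun=> 1 : F) le_rn) sumr_const card_ord.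
Qed.

Lemma mxtrace_idem (F : fieldType) n (Q : 'M[F]_n) :
  Q *m Q = Q -> \tr Q = (\rank Q)%:R.
Proof.
move=> QQ; set r := \rank Q; set X := row_ebase Q *m col_ebase Q.
have Q_ebase : Q = col_ebase Q *m pid_mx r *m row_ebase Q.
  by rewrite mulmx_ebase.
have pXp : pid_mx r *m X *m pid_mx r = pid_mx r :> 'M[F]_n.
  move: QQ; rewrite {1 2 3}Q_ebase !mulmxA.
  move/(congr1 (fun M => invmx (col_ebase Q) *m M *m invmx (row_ebase Q))).
  rewrite !mulmxA !mulmxK ?row_ebase_unit //.
  by rewrite mulVmx ?col_ebase_unit // !mul1mx.
rewrite Q_ebase -mulmxA mxtrace_mulC -mulmxA -/X.
rewrite -(pid_mx_id _ _ _ (rank_leq_col Q)).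
rewrite -mulmxA mxtrace_mulC mulmxA -(mulmxA _ (row_ebase Q)) pXp.
by rewrite mxtrace_pid_mx ?rank_leq_col.
Qed.

Lemma mxtrace_mulC_compress (R : comPzRingType) n (A B Q : 'M[R]_n) :
  (1%:M - Q) *m A *m Q = 0 -> (1%:M - Q) *m B *m Q = 0 ->
  \tr (A *m B *m Q) = \tr (B *m A *m Q).
Proof.
have compress (X Y : 'M[R]_n) :
    (1%:M - Q) *m Y *m Q = 0 -> X *m Y *m Q = X *m Q *m (Y *m Q).
  move=> cY; have YQ : Y *m Q = Q *m (Y *m Q).
    by rewrite -[LHS]mul1mx -(subrK Q 1%:M) mulmxDl mulmxA cY add0r.
  by rewrite -mulmxA [in LHS]YQ mulmxA.
move=> cA cB; rewrite (compress _ _ cB) (compress _ _ cA).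
exact: mxtrace_mulC.
Qed.

Section TraceForm.
Variables (R : realType) (n : nat) (c : 'I_n -> 'I_n -> 'I_n -> R).
Variable e : 'cV[R]_n.
Hypothesis alg : is_unital_assoc_algebra c e.
Local Notation amul := (amul c).
Local Notation lmul_mx := (lmul_mx c).

(* For Q the projection along the row space of an ideal, trace_form Q x is the
   trace of left multiplication by x on the quotient algebra. *)
Definition trace_form (Q : 'M[R]_n) (x : 'cV[R]_n) : R := \tr (lmul_mx x *m Q).

Fact trace_form_is_linear Q : linear_for *%R (trace_form Q).
Proof.
move=> a x y; rewrite /trace_form linearP mulmxDl -scalemxAl.
by rewrite mxtraceD mxtraceZ.
Qed.
HB.instance Definition _ Q := GRing.isLinear.Build R 'cV[R]_n R _ (trace_form Q)
  (trace_form_is_linear Q).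

Variable U : 'M[R]_n.
Hypothesis U_stable :
  forall x (w : 'rV[R]_n), (w <= U)%MS -> (w *m lmul_mx x <= U)%MS.
Local Notation P := (proj_mx U U^C%MS).
Local Notation Q := (1%:M - proj_mx U U^C%MS).

Lemma mulmx_compl_proj0 m (W : 'M[R]_(m, n)) : (W <= U)%MS -> W *m Q = 0.
Proof. by move=> WU; rewrite mulmxBr mulmx1 proj_mx_id ?capmx_compl ?subrr. Qed.

Lemma trace_formC x y : trace_form Q (amul x y) = trace_form Q (amul y x).
Proof.
have PxQ z : (1%:M - Q) *m lmul_mx z *m Q = 0.
  rewrite opprB addrC subrK; apply: mulmx_compl_proj0.
  apply/row_subP => i; rewrite row_mul; apply: U_stable.
  by rewrite rowE proj_mx_sub.
by rewrite /trace_form !(lmul_mxM alg) mxtrace_mulC_compress.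
Qed.

Lemma trace_form_eq0 x : (lmul_mx x <= U)%MS -> trace_form Q x = 0.
Proof. by move=> xU; rewrite /trace_form mulmx_compl_proj0 ?mxtrace0. Qed.

Lemma trace_form_unit_neq0 : ~~ row_full U -> trace_form Q e != 0.
Proof.
move=> U_not_full; have QQ : Q *m Q = Q.
  by rewrite mulmxBl mul1mx mulmx_compl_proj0 ?subr0 // -[P]mul1mx proj_mx_sub.
rewrite /trace_form (lmul_mx_unit alg) mul1mx mxtrace_idem //.
rewrite pnatr_eq0 mxrank_eq0.
apply: contra U_not_full; rewrite subr_eq0 => /eqP P1; rewrite -sub1mx.
by have := proj_mx_sub U U^C%MS 1%:M; rewrite mul1mx -P1.
Qed.
End TraceForm.

Lemma proper_ideal_trace_form (R : realType) n (c : 'I_n -> 'I_n -> 'I_n -> R) e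
    (I : set 'cV[R]_n) :
  is_unital_assoc_algebra c e -> two_sided_ideal c I -> I != setT ->
  exists phi : {scalar 'cV[R]_n},
    [/\ forall x y, phi (amul c x y) = phi (amul c y x),
        forall x, I x -> phi x = 0 & phi e != 0].
Proof.
move=> alg [I0 [ID [IZ IM]]] I_proper.
have [U U_I] := subspace_row_space I0 ID IZ.
have U_stable x (w : 'rV[R]_n) : (w <= U)%MS -> (w *m lmul_mx c x <= U)%MS.
  by rewrite -[w]trmxK lmul_mxE => /U_I /(IM x) [+ _] => /U_I.
exists (trace_form c (1%:M - proj_mx U U^C%MS)); split.
- exact (trace_formC alg U_stable).
- move=> x Ix; apply: trace_form_eq0; apply/row_subP => i.
  by rewrite rowE -trmx_delta lmul_mxE; apply/U_I; exact: (IM _ x Ix).2.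
- apply: (trace_form_unit_neq0 (U := U) alg); apply: contra I_proper => U_full.
  apply/eqP/funext => v; apply/propext; split=> // _.
  by apply/U_I; exact: submx_full.
Qed.

Section Gram.
Variables (R : realType) (n : nat) (c : 'I_n -> 'I_n -> 'I_n -> R).
Local Notation amul := (amul c).

Definition gram (phi : 'cV[R]_n -> R) : 'M[R]_n :=
  \matrix_(i, j) phi (amul (bvec R i) (bvec R j)).

Lemma gramE (phi : {scalar 'cV[R]_n}) x y :
  x^T *m gram phi *m y = (phi (amul x y))%:M.
Proof.
apply/matrixP => i j; rewrite [i]ord1 [j]ord1 [in RHS]mxE mulr1n amul_expand.
rewrite raddf_sum /= mxE; under [LHS]eq_bigr do rewrite mxE mulr_suml.
rewrite exchange_big /=; apply: eq_bigr => i' _; rewrite raddf_sum /=.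
by apply: eq_bigr => j' _; rewrite linearZ !mxE /= mulrAC.
Qed.

Lemma gram_row (phi : {scalar 'cV[R]_n}) x j :
  (x^T *m gram phi) 0 j = phi (amul x (bvec R j)).
Proof.
have /matrixP /(_ 0 0) := gramE phi x (bvec R j).
by rewrite /bvec -colE [in RHS]mxE mulr1n => <-; rewrite [RHS]mxE.
Qed.

Lemma gram_tr (phi : 'cV[R]_n -> R) :
  (forall x y, phi (amul x y) = phi (amul y x)) -> (gram phi)^T = gram phi.
Proof. by move=> phiC; apply/matrixP => i j; rewrite !mxE phiC. Qed.

Lemma gram_sandwich (e : 'cV[R]_n) (phi : {scalar 'cV[R]_n}) :
  is_unital_assoc_algebra c e ->
  (forall x y, phi (amul x y) = phi (amul y x)) ->
  sandwich_symmetric c (gram phi).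
Proof.
move=> [assoc _] phiC w u v.
have regroup a b : amul (amul w (amul a w)) b = amul (amul w a) (amul w b).
  by rewrite -assoc assoc.
by rewrite !gramE !regroup phiC.
Qed.
End Gram.

Lemma one_dimensional_unitmx (R : realType) n (V : set 'M[R]_n)
    (L G : 'M[R]_n) :
  one_dimensional V -> V L -> L \in unitmx -> V G -> G != 0 -> G \in unitmx.
Proof.
move=> [L0 [_ [_ span]]] /span [a ->] aL0_unit /span [b ->] bL0_neq0.
have L0_unit : L0 \in unitmx.
  by move: aL0_unit; rewrite !unitmxE !unitfE detZ mulf_eq0 negb_or => /andP [].
have b_neq0 : b != 0 by apply: contraNneq bL0_neq0 => ->; rewrite scale0r.
by rewrite unitmxZ ?unitfE.
Qed.

Theorem corollary6p3 (R : realType) (n : nat)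
  (c : 'I_n -> 'I_n -> 'I_n -> R) (e : 'cV[R]_n) :
  is_unital_assoc_algebra c e ->
  one_dimensional (anti_rotor c e) ->
  (exists L, anti_rotor c e L /\ L \in unitmx) ->
  simple_algebra c e.
Proof.
move=> alg dim1 [L [uL L_unit]]; split.
  have [L0 [_ [L0_neq0 _]]] := dim1.
  by apply: contraNneq L0_neq0 => e0; rewrite (unit0_trivial alg e0 L0).
move=> I I_ideal; have [I_full | I_proper] := eqVneq I setT; [by right | left].
have [phi [phiC phiI phi_e]] := proper_ideal_trace_form alg I_ideal I_proper.
have uG : anti_rotor c e (gram c phi).
  apply: (uncurling_metric_sandwich alg uL L_unit); first exact: gram_tr.
  exact: gram_sandwich alg phiC.
have G_unit : gram c phi \in unitmx.
  apply: one_dimensional_unitmx dim1 uL L_unit uG _.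
  apply: contra phi_e => /eqP G0; case: (alg) => _ [unitl _].
  have /matrixP /(_ 0 0) := gramE c phi e e.
  by rewrite G0 mulmx0 mul0mx unitl !mxE mulr1n => <-.
apply/seteqP; split=> [v Iv | v ->] /=; last by case: I_ideal.
have vG0 : v^T *m gram c phi = 0.
  apply/rowP => j; have [_ [_ [_ /(_ (bvec R j) _ Iv) [_ Ivj]]]] := I_ideal.
  by rewrite gram_row phiI // mxE.
by apply/trmx_inj; rewrite trmx0 -[v^T](mulmxK G_unit) vG0 mul0mx.
Qed.
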